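(* Let $n=2k$ and let $u_1,\ldots,u_k$ be pairwise distinct elements of $\mathbb{F}_{2^n}$ such that $u_iu_j^{2^k}\in\mathbb{F}_{2^k}^*$ for all $1\le i<j\le k$. Let $t$ be a positive integer, let $F_1,\ldots,F_t$ be reduced polynomials in $\mathbb{F}_2[X_1,\ldots,X_k]$, and set $f_i(x)=F_i(\mathrm{Tr}^n_1(u_1x),\ldots,\mathrm{Tr}^n_1(u_kx))$. Then $\widehat H(x)=(x^{2^k+1},f_1(x),\ldots,f_t(x))$ is a vectorial plateaued $(n,k+t)$-function if and only if the $(n,t)$-function $(f_1,\ldots,f_t)$ is vectorial plateaued.
   Context: $\mathrm{Tr}^n_1(x)=\sum_{i=0}^{n-1}x^{2^i}$; $x^{2^k+1}\in\mathbb{F}_{2^k}$. $\widehat H$ is viewed as a map $\mathbb{F}_{2^n}\to\mathbb{F}_{2^k}\times\mathbb{F}_2^t$ with components $\langle(u,v),\widehat H(x)\rangle=\mathrm{Tr}^k_1(ux^{2^k+1})+\sum_i v_if_i(x)$, $(u,v)\ne(0,0)$. A Boolean function $f$ is plateaued if $W_f(a)=\sum_x(-1)^{f(x)+\mathrm{Tr}^n_1(ax)}$ takes values in $\{0,\pm2^s\}$ for some $n/2\le s\le n$; a vectorial function is vectorial plateaued if all its components are plateaued. A reduced polynomial is a multilinear polynomial over $\mathbb{F}_2$. *)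

From HB Require Import structures.
From mathcomp Require Import all_boot all_order all_algebra all_field.
From mathcomp Require Import mpoly.
Set Implicit Arguments. Unset Strict Implicit. Unset Printing Implicit Defensive.
Import GRing.Theory Num.Theory.
Local Open Scope ring_scope.

Definition trF (F : finFieldType) (m : nat) (x : F) : F :=
  \sum_(i < m) x ^+ (2 ^ i).

(* The trace value (which lies in F_2 = {0,1} inside F) viewed in 'F_2. *)
Definition trB (F : finFieldType) (m : nat) (x : F) : 'F_2 :=
  if trF m x == 1 then 1 else 0.

Definition inSubF (F : finFieldType) (k : nat) (y : F) : bool :=
  y ^+ (2 ^ k) == y.

Definition sgnB (b : 'F_2) : int := if b == 0 then 1 else -1.

Definition walsh (F : finFieldType) (n : nat) (f : F -> 'F_2) (a : F) : int :=
  \sum_(x : F) sgnB (f x + trB n (a * x)).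

Definition plateaued (F : finFieldType) (n : nat) (f : F -> 'F_2) : Prop :=
  exists s : nat, (n <= 2 * s)%N /\ (s <= n)%N /\
    forall a : F, walsh n f a = 0 \/ `|walsh n f a| = (2 ^ s)%:Z.

Definition vplateaued (F : finFieldType) (n t : nat) (f : 'I_t -> F -> 'F_2) : Prop :=
  forall v : 'I_t -> 'F_2, (exists i, v i != 0) ->
    plateaued n (fun x => \sum_(i < t) v i * f i x).

(* Vectorial plateaued (n,k+t)-function Hhat(x) = (x^(2^k+1), f_1(x),...,f_t(x))
   with values in F_{2^k} x F_2^t: all components
   x |-> Tr^k_1(u x^(2^k+1)) + sum_i v_i f_i(x), (u,v) <> (0,0), u in F_{2^k},
   are plateaued. *)
Definition vplateauedH (F : finFieldType) (n k t : nat) (f : 'I_t -> F -> 'F_2) : Prop :=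
  forall (w : F) (v : 'I_t -> 'F_2), inSubF k w -> (w != 0 \/ exists i, v i != 0) ->
    plateaued n (fun x => trB k (w * x ^+ (2 ^ k + 1)) + \sum_(i < t) v i * f i x).

Definition reduced (k : nat) (P : {mpoly 'F_2[k]}) : Prop :=
  forall m, m \in msupp P -> forall j : 'I_k, (m j <= 1)%N.

Definition boolF (F : finFieldType) (n k : nat) (u : 'I_k -> F)
  (P : {mpoly 'F_2[k]}) (x : F) : 'F_2 :=
  P.@[fun j => trB n (u j * x)].

From HB Require Import structures.
From mathcomp Require Import all_boot all_order all_algebra all_field.
From mathcomp Require Import mpoly.
From mathcomp Require Import ring zify.
Set Implicit Arguments. Unset Strict Implicit. Unset Printing Implicit Defensive.
Import GRing.Theory Num.Theory.
Local Open Scope ring_scope.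

(* The components with w = 0 are exactly the components of (f_1, ..., f_t);
   we show that every component h = Q_w + g with w <> 0, where
   Q_w(x) = Tr^k_1(w x^(2^k+1)) and g = sum_i v_i f_i, is bent.  Since
   u_1 u_j^(2^k) lies in F_{2^k}^*, every u_j c lies in F_{2^k} as soon as
   u_1 c does, so g is invariant under the line V = u_1^-1 F_{2^k}.  The
   derivative D_e h(x) = Q_w(e) + Tr^n_1(w e^(2^k) x) + D_e g(x) is then
   complemented by a translation c: for e in V any c with
   Tr^n_1(w e^(2^k) c) = 1 works since D_e g = 0, and for e outside V such a
   c exists inside V.  Hence every derivative is balanced and
   W_h(a)^2 = 2^n for all a. *)

Lemma sgnBD (b c : 'F_2) : sgnB (b + c) = sgnB b * sgnB c.
Proof. by case: b c => [[|[|//]] ?] [[|[|//]] ?]. Qed.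

Lemma addrr_F2 (b : 'F_2) : b + b = 0.
Proof. by rewrite addrr_pchar2 // pchar_Fp. Qed.

Lemma sum_sgnB_eq0 (V : finZmodType) (phi : V -> 'F_2) (c : V) :
  (forall x, phi (x + c) = phi x + 1) -> \sum_x sgnB (phi x) = 0.
Proof.
move=> phic; set S := \sum_x _.
have SN : S = - S.
  rewrite {1}/S (reindex_inj (addIr c)) -sumrN; apply: eq_bigr => x _.
  by rewrite phic sgnBD mulrN1.
lia.
Qed.

Definition bderiv (V : zmodType) (h : V -> 'F_2) (e x : V) : 'F_2 := h (x + e) + h x.

Lemma bderiv0 (V : zmodType) (h : V -> 'F_2) x : bderiv h 0 x = 0.
Proof. by rewrite /bderiv addr0 addrr_F2. Qed.

Lemma eq_plateaued (F : finFieldType) n (f g : F -> 'F_2) :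
  f =1 g -> plateaued n f <-> plateaued n g.
Proof.
move=> fg; have W a : walsh n f a = walsh n g a.
  by apply: eq_bigr => x _; rewrite fg.
by split=> -[s [? [? Ws]]]; exists s; do 2!split => //; move=> a;
  [rewrite -W | rewrite W]; apply: Ws.
Qed.

Lemma bent_plateaued (F : finFieldType) k (h : F -> 'F_2) :
  (forall a, walsh (k + k) h a ^+ 2 = (2 ^ (k + k))%:Z) -> plateaued (k + k) h.
Proof.
move=> Wsqr; exists k; split; first lia; split; first lia.
move=> a; right; apply/eqP; rewrite -(eqrXn2 (ltn0Sn 1)) ?normr_ge0 //.
by rewrite real_normK ?num_real // Wsqr -!natz -natrX -expnM muln2 addnn.
Qed.

Section Trace.
Variable F : finFieldType.

Lemma trF0 m : trF m (0 : F) = 0.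
Proof. by rewrite /trF big1 // => i _; rewrite expr0n expn_eq0. Qed.

Lemma trB0 m : trB m (0 : F) = 0.
Proof. by rewrite /trB trF0 eq_sym oner_eq0. Qed.

Lemma inSubFM m (x y : F) : inSubF m x -> inSubF m y -> inSubF m (x * y).
Proof. by move=> /eqP xm /eqP ym; rewrite /inSubF exprMn xm ym. Qed.

Lemma inSubFV m (x : F) : inSubF m x -> inSubF m x^-1.
Proof. by move=> /eqP xm; rewrite /inSubF exprVn xm. Qed.

Hypothesis pchar2 : 2 \in [pchar F].

Lemma exprD_pchar2X i (x y : F) : (x + y) ^+ (2 ^ i) = x ^+ (2 ^ i) + y ^+ (2 ^ i).
Proof. by rewrite exprDn_pchar // (eq_pnat _ (pcharf_eq pchar2)) pnatX pnat_id. Qed.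

Lemma inSubFD m (x y : F) : inSubF m x -> inSubF m y -> inSubF m (x + y).
Proof. by move=> /eqP xm /eqP ym; rewrite /inSubF exprD_pchar2X xm ym. Qed.

Lemma trFD m (x y : F) : trF m (x + y) = trF m x + trF m y.
Proof. by rewrite /trF -big_split; apply: eq_bigr => i _; apply: exprD_pchar2X. Qed.

Lemma trF_sqr m (z : F) : trF m z ^+ 2 = trF m (z ^+ 2).
Proof.
rewrite /trF -[2%N]expn1 (big_morph _ (exprD_pchar2X 1) (expr0n _ _)).
by apply: eq_bigr => i _; rewrite -!exprM mulnC.
Qed.

Lemma trF_sqr_subF m (z : F) : inSubF m z -> trF m (z ^+ 2) = trF m z.
Proof.
move=> /eqP zm; apply: (@addrI _ z); rewrite /trF.
transitivity (\sum_(i < m.+1) z ^+ (2 ^ i)); last by rewrite big_ord_recr /= zm addrC.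
rewrite big_ord_recl expn0 expr1; congr (_ + _); apply: eq_bigr => i _.
by rewrite expnS -exprM.
Qed.

Lemma trF_bit m (z : F) : inSubF m z -> trF m z = 0 \/ trF m z = 1.
Proof.
move=> zm; have : trF m z * (trF m z - 1) == 0.
  by rewrite mulrBr mulr1 -expr2 trF_sqr trF_sqr_subF // subrr.
by rewrite mulf_eq0 subr_eq0 => /orP[] /eqP; [left | right].
Qed.

Lemma trBD m (x y : F) :
  inSubF m x -> inSubF m y -> trB m (x + y) = trB m x + trB m y.
Proof.
move=> /trF_bit x01 /trF_bit y01; rewrite /trB trFD.
have oneF : (0 : F) == 1 = false by rewrite eq_sym oner_eq0.
by case: x01 y01 => -> [] ->;
  rewrite ?(addr0, add0r, addrr_pchar2 pchar2) ?eqxx ?oneF; apply: val_inj.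
Qed.

End Trace.

Section CardTrace.
Variables (F : finFieldType) (n : nat).
Hypothesis cardF : #|F| = (2 ^ n)%N.

Lemma pchar2_card : 2 \in [pchar F].
Proof. exact: card_finPcharP cardF _. Qed.

Lemma inSubF_card (x : F) : inSubF n x.
Proof. by rewrite /inSubF -cardF expf_card. Qed.

Lemma trB_cardD (x y : F) : trB n (x + y) = trB n x + trB n y.
Proof. by rewrite (trBD pchar2_card) ?inSubF_card. Qed.

Lemma trF_card_frobX i (z : F) : trF n (z ^+ (2 ^ i)) = trF n z.
Proof.
elim: i => [|i IHi]; first by rewrite expr1.
by rewrite expnS mulnC exprM trF_sqr_subF ?inSubF_card.
Qed.

Lemma trF_card_surj : exists z : F, trF n z = 1.
Proof.
have n_gt0 : (0 < n)%N by case: n cardF (finNzRing_gt1 F) => // ->.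
pose p : {poly F} := \sum_(i < n) 'X^(2 ^ i).
have pE x : p.[x] = trF n x.
  by rewrite horner_sum; apply: eq_bigr => i _; rewrite hornerXn.
have p_neq0 : p != 0.
  apply/eqP => /(congr1 (fun p : {poly F} => p`_1)).
  rewrite coef0 coef_sum (bigD1 (Ordinal n_gt0)) //= coefXn eqxx big1 ?addr0.
    by move/eqP; rewrite oner_eq0.
  case=> -[|i] //= _ _; rewrite coefXn.
  by have /negbTE-> : (1 != 2 ^ i.+1)%N by rewrite expnS; lia.
have size_p : (size p <= (2 ^ n.-1).+1)%N.
  rewrite (leq_trans (size_sum _ _ _)) //; apply/bigmax_leqP => i _.
  by rewrite size_polyXn ltnS leq_pexp2l // -ltnS prednK.
have [z /eqP trz | tr_neq1] := pickP (fun z : F => trF n z == 1); first by exists z.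
have /max_poly_roots : all (root p) (enum F).
  apply/allP => x _; rewrite /root pE.
  by case: (trF_bit pchar2_card (inSubF_card x)) (tr_neq1 x) => ->; rewrite ?eqxx.
move=> /(_ p_neq0 (enum_uniq F)); rewrite -cardE cardF => /leq_trans/(_ size_p).
have -> : (2 ^ n = 2 * 2 ^ n.-1)%N by rewrite -expnS prednK.
by have := expn_gt0 2 n.-1; lia.
Qed.

Lemma walsh_sqr (h : F -> 'F_2) a :
  walsh n h a ^+ 2 = \sum_(e : F) \sum_(x : F) sgnB (bderiv h e x + trB n (a * e)).
Proof.
rewrite expr2 /walsh mulr_suml [RHS]exchange_big; apply: eq_bigr => x _.
rewrite mulr_sumr (reindex_inj (addrI x)); apply: eq_bigr => e _ /=.
rewrite -sgnBD /bderiv mulrDr trB_cardD [x + e]addrC.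
set hx := h x; set he := h (e + x); set tx := trB n (a * x); set te := trB n (a * e).
have -> : hx + tx + (he + (tx + te)) = he + hx + te + (tx + tx) by ring.
by rewrite addrr_F2 addr0.
Qed.

Lemma walsh_sqr_card (h : F -> 'F_2) a :
  (forall e, e != 0 -> exists c, forall x, bderiv h e (x + c) = bderiv h e x + 1) ->
  walsh n h a ^+ 2 = (2 ^ n)%:Z.
Proof.
move=> shift; rewrite walsh_sqr (bigD1 0) //= [X in _ + X]big1 => [|e e_neq0]; last first.
  have [c hc] := shift e e_neq0.
  by apply: (sum_sgnB_eq0 (c := c)) => x; rewrite hc addrAC.
under eq_bigr => x _ do rewrite bderiv0 mulr0 trB0 addr0.
rewrite sumr_const addr0 /sgnB eqxx.
by rewrite -[#|xpredT|]/#|F| cardF natz.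
Qed.

Lemma boolF_translate m (u : 'I_m -> F) (P : {mpoly 'F_2[m]}) c x :
  (forall j, trB n (u j * c) = 0) -> boolF n u P (x + c) = boolF n u P x.
Proof. by move=> uc; apply: meval_eq => j; rewrite mulrDr trB_cardD uc addr0. Qed.

End CardTrace.

Section HalfField.
Variables (F : finFieldType) (k : nat).
Hypothesis cardF : #|F| = (2 ^ (k + k))%N.
Local Notation q := (2 ^ k)%N.
Let pchar2 := pchar2_card cardF.

Lemma frobqK (x : F) : (x ^+ q) ^+ q = x.
Proof. by rewrite -exprM -expnD (eqP (inSubF_card cardF x)). Qed.

Lemma inSubF_norm (x : F) : inSubF k (x ^+ (q + 1)).
Proof. by rewrite /inSubF exprD expr1 exprMn frobqK mulrC. Qed.

Lemma inSubF_reltrace (z : F) : inSubF k (z + z ^+ q).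
Proof. by rewrite /inSubF (exprD_pchar2X pchar2) frobqK addrC. Qed.

Lemma inSubF_transfer (a b c : F) :
  a * b ^+ q != 0 -> inSubF k (a * b ^+ q) -> inSubF k (a * c) -> inSubF k (b * c).
Proof.
rewrite mulf_eq0 negb_or => /andP[a_neq0 _] /eqP abq /eqP ac.
rewrite exprMn frobqK in abq; rewrite exprMn in ac.
apply/eqP/(mulfI (expf_neq0 q a_neq0)); rewrite exprMn.
by rewrite mulrCA ac mulrA [_ * a]mulrC -abq mulrA.
Qed.

Lemma trF_split (a : F) : trF (k + k) a = trF k a + trF k (a ^+ q).
Proof.
rewrite /trF big_split_ord /=; congr (_ + _); apply: eq_bigr => i _ /=.
by rewrite expnD exprM.
Qed.

Lemma trB_split (z : F) : trB (k + k) z = trB k (z + z ^+ q).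
Proof. by rewrite /trB trF_split (trFD pchar2). Qed.

Lemma trB_subF_eq0 (a : F) : inSubF k a -> trB (k + k) a = 0.
Proof. by move=> /eqP aq; rewrite trB_split aq (addrr_pchar2 pchar2) trB0. Qed.

Lemma trB_line_surj (y : F) :
  ~~ inSubF k y -> exists2 s, inSubF k s & trB (k + k) (y * s) = 1.
Proof.
move=> y_notin; have [z0 trz0] := trF_card_surj cardF.
have d_neq0 : y + y ^+ q != 0.
  by apply: contra y_notin; rewrite addr_eq0 (oppr_pchar2 pchar2) eq_sym.
set z := z0 / (y + y ^+ q).
exists (z + z ^+ q); first exact: inSubF_reltrace.
have -> : y * (z + z ^+ q) = y * z + (y ^+ q * z) ^+ q.
  by rewrite [(_ * z) ^+ q]exprMn frobqK mulrDr.
rewrite /trB (trFD pchar2) trF_card_frobX // -(trFD pchar2) -mulrDl.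
by rewrite /z mulrC divfK // trz0 eqxx.
Qed.

Definition quadB (w x : F) : 'F_2 := trB k (w * x ^+ (q + 1)).

Lemma bderiv_quadB w e x : inSubF k w ->
  bderiv (quadB w) e x = quadB w e + trB (k + k) (w * e ^+ q * x).
Proof.
move=> w_sub; rewrite /bderiv /quadB; set z := w * e ^+ q * x.
have zq : z ^+ q = w * e * x ^+ q by rewrite !exprMn (eqP w_sub) frobqK.
have -> : w * (x + e) ^+ (q + 1) = w * x ^+ (q + 1) + w * e ^+ (q + 1) + (z + z ^+ q).
  by rewrite zq /z !exprD !expr1 (exprD_pchar2X pchar2); ring.
have wx := inSubFM w_sub (inSubF_norm x); have we := inSubFM w_sub (inSubF_norm e).
rewrite (trBD pchar2 (inSubFD pchar2 wx we) (inSubF_reltrace z)) (trBD pchar2 wx we).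
rewrite -trB_split; set Qx := trB k _; set Qe := trB k _; set T := trB _ z.
have -> : Qx + Qe + T + Qx = Qe + T + (Qx + Qx) by ring.
by rewrite addrr_F2 addr0.
Qed.

Section QuadraticPlusInvariant.
Variables (w u0 : F) (g : F -> 'F_2).
Hypotheses (w_sub : inSubF k w) (w_neq0 : w != 0).
Hypothesis g_inv : forall c x, inSubF k (u0 * c) -> g (x + c) = g x.

Lemma exists_trace_one_shift e : e != 0 ->
  exists2 c, trB (k + k) (w * e ^+ q * c) = 1 &
             forall x, bderiv g e (x + c) = bderiv g e x.
Proof.
move=> e_neq0; have b_neq0 : w * e ^+ q != 0 by rewrite mulf_neq0 ?expf_neq0.
have [u0e_sub | u0e_notin] := boolP (inSubF k (u0 * e)).
  have [z0 trz0] := trF_card_surj cardF.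
  exists (z0 / (w * e ^+ q)); first by rewrite mulrC divfK // /trB trz0 eqxx.
  by move=> x; rewrite /bderiv !(g_inv _ u0e_sub) !addrr_F2.
have u0_neq0 : u0 != 0.
  by apply: contraNneq u0e_notin => ->; rewrite mul0r /inSubF expr0n expn_eq0.
have [|s s_sub trs] := @trB_line_surj (w * e ^+ q / u0).
  apply: contra u0e_notin => y_sub; rewrite mulrC.
  apply: (@inSubF_transfer u0^-1); rewrite ?mulVf ?mulf_neq0 ?invr_eq0 ?expf_neq0 //.
    by rewrite mulrC -(mulKf w_neq0 (_ * _)) mulrA inSubFM ?inSubFV.
  by rewrite /inSubF expr1n.
exists (s / u0); first by rewrite -trs mulrA mulrAC.
have u0c : inSubF k (u0 * (s / u0)) by rewrite mulrC divfK.
by move=> x; rewrite /bderiv (addrAC x) !(g_inv _ u0c).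
Qed.

Lemma bderiv_quad_invariant_shift e : e != 0 ->
  exists c, forall x, bderiv (fun x => quadB w x + g x) e (x + c) =
                      bderiv (fun x => quadB w x + g x) e x + 1.
Proof.
move=> /exists_trace_one_shift [c trc g_shift]; exists c => x.
have bderivE y : bderiv (fun x => quadB w x + g x) e y =
                 quadB w e + trB (k + k) (w * e ^+ q * y) + bderiv g e y.
  by rewrite -bderiv_quadB // /bderiv; ring.
by rewrite !bderivE g_shift mulrDr trB_cardD // trc; ring.
Qed.

Lemma plateaued_quad_invariant : plateaued (k + k) (fun x => quadB w x + g x).
Proof.
apply: bent_plateaued => a; apply: walsh_sqr_card => //.
exact: bderiv_quad_invariant_shift.
Qed.

End QuadraticPlusInvariant.

End HalfField.

Theorem corollary5 (F : finFieldType) (n k t : nat) (u : 'I_k -> F)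
    (P : 'I_t -> {mpoly 'F_2[k]}) :
  n = (2 * k)%N ->
  #|F| = (2 ^ n)%N ->
  injective u ->
  (forall i j : 'I_k, (i < j)%N ->
     u i * u j ^+ (2 ^ k) != 0 /\ inSubF k (u i * u j ^+ (2 ^ k))) ->
  (0 < t)%N ->
  (forall i, reduced (P i)) ->
  vplateauedH n k (fun i => boolF n u (P i)) <->
  vplateaued n (fun i => boolF n u (P i)).
Proof.
move=> -> cardF _ u_ratio _ _; rewrite mul2n -addnn in cardF *.
have k_gt0 : (0 < k)%N by case: k cardF {u u_ratio P} (finNzRing_gt1 F) => // ->.
pose i0 := Ordinal k_gt0.
set f := fun i => boolF (k + k) u (P i).
have f_inv c x i : inSubF k (u i0 * c) -> f i (x + c) = f i x.
  move=> u0c; apply: (boolF_translate cardF) => j; apply: (trB_subF_eq0 cardF).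
  have [j0 | j_gt0] := posnP j; first by rewrite (_ : j = i0) //; apply: val_inj.
  by have [? ?] := u_ratio i0 j j_gt0; apply: (inSubF_transfer cardF) u0c.
have sub0 : inSubF k (0 : F) by rewrite /inSubF expr0n expn_eq0.
have drop0 v : (fun x => trB k (0 * x ^+ (2 ^ k + 1)) + \sum_(i < t) v i * f i x)
                =1 (fun x => \sum_(i < t) v i * f i x).
  by move=> x; rewrite mul0r trB0 add0r.
split=> [H v v_neq0 | H w v w_sub wv_neq0].
  by apply/(eq_plateaued _ (drop0 v))/H => //; right.
have [w0 | w_neq0] := eqVneq w 0.
  by rewrite w0; apply/(eq_plateaued _ (drop0 v))/H; case: wv_neq0; rewrite ?w0 ?eqxx.
apply: (plateaued_quad_invariant cardF w_sub w_neq0 (u0 := u i0)) => c x u0c.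
by apply: eq_bigr => i _; rewrite f_inv.
Qed.
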